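(* Let $H$, $G$, the Coxeter generators $s_1,\dots,s_6,s_{3'}$ and the cosets $\pm v(i,j)\in G\backslash H$ be as in the context, with $H$ acting on $G\backslash H$ by right multiplication. (a) For $0\le k\le 5$ let $\rho_k$ denote the transposition $(k+1,k+2)$ of $\{0,1,\dots,7\}$. Then for all $0\le i<j\le 7$ and either choice of sign, $s_{6-k}(\pm v(i,j))=\pm v(\rho_k(i),\rho_k(j))$ (same sign on both sides). (b) Let $K_0=\{0,1,2,3\}$ and $K_1=\{4,5,6,7\}$. Then for $0\le i<j\le 7$, $$s_{3'}(\pm v(i,j))=\begin{cases}\mp v(k,l) & \text{if } \{i,j,k,l\}=K_p \text{ for some } p\in\{0,1\},\\ \pm v(i,j) & \text{otherwise.}\end{cases}$$
   Context: Let $W=\{(a,b,c,d,e,f,g,h)^T\in\mathbb{C}^8: 2+3a=b+c+d+e+f+g+h\}$. A transposition $(ij)\in S_8$ is identified with the $8\times8$ permutation matrix swapping the $i$th and $j$th coordinates. Let $X\in GL(8,\mathbb{C})$ be the matrix whose rows are $(\tfrac12,\tfrac12,-\tfrac12,-\tfrac12,-\tfrac12,\tfrac12,\tfrac12,\tfrac12)$, $e_2$, $(-\tfrac12,\tfrac12,\tfrac12,-\tfrac12,-\tfrac12,\tfrac12,\tfrac12,\tfrac12)$, $(-\tfrac12,\tfrac12,-\tfrac12,\tfrac12,-\tfrac12,\tfrac12,\tfrac12,\tfrac12)$, $(-\tfrac12,\tfrac12,-\tfrac12,-\tfrac12,\tfrac12,\tfrac12,\tfrac12,\tfrac12)$,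 $e_6,e_7,e_8$ (so for $\vec w\in W$, $X\vec w=(1+2a-c-d-e,b,1+a-d-e,1+a-c-e,1+a-c-d,f,g,h)^T$), and let $Y$ be the matrix with rows $(-1,2,0,0,0,0,0,0)$, $(-1,1,1,0,0,0,0,0)$, $(0,1,0,0,0,0,0,0)$, and, for $r=4,\dots,8$, the row $-e_1+e_2+e_r$ (so $Y\vec w=(2b-a,b+c-a,b,b+d-a,b+e-a,b+f-a,b+g-a,b+h-a)^T$). Let $H=\langle(23),(34),(45),(56),(67),(78),X,Y\rangle\subset GL(8,\mathbb{C})$; $H\cong W(E_7)$ with Coxeter generators $s_1=Y(23)$, $s_2=(34)$, $s_3=(45)$, $s_4=(56)$, $s_5=(67)$, $s_6=(78)$, $s_{3'}=X$. Let $G=\langle s_2,s_3,s_4,s_5,s_6,s_{3'}\rangle$ ($\cong W(E_6)$, index 56 in $H$). For $\vec w\in W$ put $x_0=b,x_1=h,x_2=g,x_3=f,x_4=e,x_5=d,x_6=c,x_7=a$. For $\alpha,\beta\in H$, the second entries of $\alpha\vec w$ and $\beta\vec w$ (as affine functions of $\vec w\in W$) agree iff $G\alpha=G\beta$, and each such second entry is $x_i+x_j-x_7$ or $1+x_7-x_i-x_j$ for some $0\le i<j\le 7$. Write $v(i,j)$ for the right coset of $G$ whose elements $\alpha$ give second entry $x_i+x_j-x_7$, and $-v(i,j)$ for the coset giving $1+x_7-x_i-x_j$; these are the 56 cosets, and $\pm v(j,i)$ means $\pm v(i,j)$. For an involution $s\in H$ and a coset $G\beta$, $s(G\beta):=G\beta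 s$. *)

From mathcomp Require Import all_boot all_order all_algebra all_fingroup all_field.
Set Implicit Arguments. Unset Strict Implicit. Unset Printing Implicit Defensive.
Import GRing.Theory Num.Theory.
Local Open Scope ring_scope.

(* 0-based coordinate indices: coordinate n (0..7) of C^8 corresponds to a,b,c,d,e,f,g,h. *)
Definition half : algC := 2%:R^-1.

Definition Xent (r c : nat) : algC :=
  match r with
  | 0 => if (2 <= c <= 4)%N then - half else half
  | 2 | 3 | 4 =>
      if c == 0%N then - half
      else if c == 1%N then half
      else if (c <= 4)%N then (if c == r then half else - half)
      else half
  | _ => (r == c)%:R
  end.
Definition Xmx : 'M[algC]_8 := \matrix_(r < 8, c < 8) Xent r c.

Definition Yent (r c : nat) : algC :=
  match r with
  | 0 => if c == 0%N then -1 else if c == 1%N then 2%:R else 0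
  | 1 => if c == 0%N then -1 else if (c == 1%N) || (c == 2%N) then 1 else 0
  | 2 => (c == 1%N)%:R
  | _ => if c == 0%N then -1 else if c == 1%N then 1 else (c == r)%:R
  end.
Definition Ymx : 'M[algC]_8 := \matrix_(r < 8, c < 8) Yent r c.

(* Transposition matrix swapping the 1-based coordinates p and q. *)
Definition T (p q : nat) : 'M[algC]_8 := tperm_mx (inord p.-1 : 'I_8) (inord q.-1).

Inductive genH : 'M[algC]_8 -> Prop :=
  | genT (p : nat) : (2 <= p <= 7)%N -> genH (T p p.+1)
  | genX : genH Xmx
  | genY : genH Ymx.

Inductive inH : 'M[algC]_8 -> Prop :=
  | inH1 : inH 1%:M
  | inH_gen A : genH A -> inH A
  | inH_mul A B : inH A -> inH B -> inH (A *m B)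
  | inH_inv A : inH A -> inH (invmx A).

(* Coxeter generators s_1..s_6 (s_{3'} = Xmx). *)
Definition sgen (m : nat) : 'M[algC]_8 :=
  if m == 1%N then Ymx *m T 2 3 else T m.+1 m.+2.

Definition wc (n : nat) (w : 'cV[algC]_8) : algC := w (inord n) 0.
Definition inW (w : 'cV[algC]_8) : Prop :=
  2%:R + 3%:R * wc 0 w =
  wc 1 w + wc 2 w + wc 3 w + wc 4 w + wc 5 w + wc 6 w + wc 7 w.

(* x_0 = b, x_1 = h, ..., x_6 = c, x_7 = a. *)
Definition xidx (i : nat) : nat :=
  if i == 0%N then 1%N else if i == 7%N then 0%N else (8 - i)%N.
Definition xv (i : nat) (w : 'cV[algC]_8) : algC := wc (xidx i) w.

Definition second (A : 'M[algC]_8) (w : 'cV[algC]_8) : algC := (A *m w) (inord 1) 0.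

(* A lies in the coset +v(i,j) (b = true) or -v(i,j) (b = false). *)
Definition vset (b : bool) (i j : nat) (A : 'M[algC]_8) : Prop :=
  inH A /\
  forall w, inW w ->
    second A w = (if b then xv i w + xv j w - xv 7 w
                  else 1 + xv 7 w - xv i w - xv j w).

Definition rho (k : 'I_6) : {perm 'I_8} := tperm (inord k.+1) (inord k.+2).

Definition K (p : bool) : {set 'I_8} :=
  if p then [set i : 'I_8 | (4 <= i)%N] else [set i : 'I_8 | (i < 4)%N].

From Pilot Require Import Defs.
From mathcomp Require Import all_boot all_order all_algebra all_fingroup all_field.
From mathcomp Require Import ring.
Set Implicit Arguments. Unset Strict Implicit. Unset Printing Implicit Defensive.
Import GRing.Theory Num.Theory.
Local Open Scope ring_scope.

(* Right multiplication by s maps the coset of A to that of A s, and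
   second (A s) w = second A (s w): it suffices to know how each generator
   acts on the coordinates x_0, ..., x_7 of W.  The transpositions s_2, ..., s_6
   permute x_1, ..., x_7 by rho; s_1 = Y (23) permutes them by rho_5 and adds
   x_6 - x_7 to all of them, so the shifts cancel in x_i + x_j - x_7.
   X adds e = 1 + x_7 - x_4 - x_5 - x_6 to x_4, ..., x_7; here the shifts cancel
   unless i and j lie in the same K_p, and then the equation of W, in the form
   sum_(n in K_p) x_n = 1 + 2 x_7 -+ e, turns the result into 1 + x_7 - x_k - x_l. *)

Definition vform (b : bool) (i j : nat) (w : 'cV[algC]_8) : algC :=
  if b then xv i w + xv j w - xv 7 w else 1 + xv 7 w - xv i w - xv j w.

Lemma second_mulmx (A S : 'M[algC]_8) w : second (A *m S) w = second A (S *m w).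
Proof. by rewrite /second mulmxA. Qed.

Lemma vset_mulmx (S A : 'M[algC]_8) b i j b' i' j' :
  inH S -> (forall w, inW w -> inW (S *m w)) ->
  (forall w, inW w -> vform b i j (S *m w) = vform b' i' j' w) ->
  vset b i j A -> vset b' i' j' (A *m S).
Proof.
move=> HS SW Sv [HA Av]; split=> [|w Ww]; first exact: inH_mul.
by rewrite second_mulmx Av; [exact: Sv | exact: SW].
Qed.

Lemma big_ord8 (V : nmodType) (F : 'I_8 -> V) : \sum_(c < 8) F c =
  F (inord 0) + F (inord 1) + F (inord 2) + F (inord 3) + F (inord 4)
  + F (inord 5) + F (inord 6) + F (inord 7).
Proof.
rewrite !big_ord_recl big_ord0 addr0 !addrA.
by congr (_ + _ + _ + _ + _ + _ + _ + _); congr F; apply/val_inj; rewrite /= inordK.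
Qed.

Lemma wc_mulmx (M : 'M[algC]_8) w n : wc n (M *m w) =
  M (inord n) (inord 0) * wc 0 w + M (inord n) (inord 1) * wc 1 w
  + M (inord n) (inord 2) * wc 2 w + M (inord n) (inord 3) * wc 3 w
  + M (inord n) (inord 4) * wc 4 w + M (inord n) (inord 5) * wc 5 w
  + M (inord n) (inord 6) * wc 6 w + M (inord n) (inord 7) * wc 7 w.
Proof. by rewrite /wc mxE big_ord8. Qed.

Lemma eq_inord (n : 'I_8) m : (m < 8)%N -> (n == inord m) = (n == m :> nat).
Proof. by move=> lt_m; rewrite -val_eqE /= inordK. Qed.

Lemma wc_tperm (p q n : nat) w : (p < 8)%N -> (q < 8)%N -> (n < 8)%N ->
  wc n (tperm_mx (inord p) (inord q) *m w) =
  wc (if n == p then q else if n == q then p else n) w.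
Proof.
move=> lt_p lt_q lt_n.
rewrite -xrowE /wc /xrow /row_perm mxE permE /= !eq_inord // inordK //.
by case: ifP => _ //; case: ifP.
Qed.

Lemma inW_wc1 w : inW w ->
  wc 1 w = 2 + 3 * wc 0 w - (wc 2 w + wc 3 w + wc 4 w + wc 5 w + wc 6 w + wc 7 w).
Proof. by rewrite /inW => ->; ring. Qed.

Lemma rhoE (k : 'I_6) (n : 'I_8) :
  rho k n =
  (if n == k.+1 :> nat then k.+2 else if n == k.+2 :> nat then k.+1 else n) :> nat.
Proof.
have lt_k2 : (k.+2 < 8)%N := ltn_ord k.
have lt_k1 : (k.+1 < 8)%N := ltnW lt_k2.
by rewrite permE /= !eq_inord //; do 2?case: ifP => _; rewrite ?inordK.
Qed.

Lemma inH_sgen m : (0 < m < 7)%N -> inH (sgen m).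
Proof.
move=> m_range; rewrite /sgen; case: ifP => _; last exact/inH_gen/genT.
by apply: inH_mul; apply: inH_gen; [exact: genY | exact: genT].
Qed.

Lemma inW_sgen m w : (0 < m < 7)%N -> inW w -> inW (sgen m *m w).
Proof.
move=> + /inW_wc1 Ww; rewrite /inW /sgen.
case: m => [|[|[|[|[|[|[|m]]]]]]] //= _; rewrite ?wc_tperm //= ?Ww; try ring.
by rewrite -mulmxA !(wc_mulmx Ymx) !mxE !inordK //= !wc_tperm //= Ww; ring.
Qed.

Definition sgen_shift (k : 'I_6) w := if val k == 5%N then xv 6 w - xv 7 w else 0.

Lemma xv_sgen (k : 'I_6) (n : 'I_8) w :
  xv n (sgen (6 - k) *m w) = xv (rho k n) w + sgen_shift k w.
Proof.
rewrite rhoE /sgen_shift.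
case: k => [[|[|[|[|[|[|k]]]]]] lt_k] //=;
case: n => [[|[|[|[|[|[|[|[|n]]]]]]]] lt_n] //=;
rewrite /xv /xidx /sgen /= ?wc_tperm //= ?addr0 //.
all: rewrite -mulmxA wc_mulmx !mxE !inordK //= !wc_tperm //=; ring.
Qed.

Lemma vform_sgen (k : 'I_6) b (i j : 'I_8) w :
  vform b i j (sgen (6 - k) *m w) = vform b (rho k i) (rho k j) w.
Proof.
have xv7 : xv 7 (sgen (6 - k) *m w) = xv 7 w + 2 * sgen_shift k w.
  rewrite (xv_sgen k ord_max) rhoE /sgen_shift.
  by case: k => [[|[|[|[|[|[|k]]]]]] lt_k] //=; rewrite ?mulr0 ?addr0 //; ring.
by rewrite /vform !xv_sgen xv7; case: b; ring.
Qed.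

Definition Xmx_shift w := 1 + xv 7 w - xv 4 w - xv 5 w - xv 6 w.

Lemma xv_Xmx (n : 'I_8) w : inW w ->
  xv n (Xmx *m w) = xv n w + if (4 <= n)%N then Xmx_shift w else 0.
Proof.
move=> /inW_wc1 Ww; rewrite /Xmx_shift.
by case: n => [[|[|[|[|[|[|[|[|n]]]]]]]] lt_n] //=;
  rewrite /xv /xidx /= wc_mulmx !mxE !inordK //= /Defs.half ?Ww; field.
Qed.

Lemma xv7_Xmx w : inW w -> xv 7 (Xmx *m w) = xv 7 w + Xmx_shift w.
Proof. exact: (xv_Xmx ord_max). Qed.

Lemma inW_Xmx w : inW w -> inW (Xmx *m w).
Proof.
by move=> /inW_wc1 Ww; rewrite /inW !wc_mulmx !mxE !inordK //= /Defs.half Ww; field.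
Qed.

Lemma mem_K p (i : 'I_8) : (i \in K p) = ((4 <= i)%N == p).
Proof. by rewrite /K; case: p; rewrite inE ?eqb_id ?eqbF_neg ?ltnNge. Qed.

Lemma card_K p : #|K p| = 4%N.
Proof. by rewrite -sum1_card big_mkcond big_ord8 !mem_K !inordK //; case: p. Qed.

Lemma big_set4 (T : finType) (V : nmodType) (F : T -> V) (i j k l : T) :
  #|[set i; j; k; l]| = 4%N -> \sum_(n in [set i; j; k; l]) F n = F i + F j + F k + F l.
Proof.
have set4E : [set i; j; k; l] =i [:: i; j; k; l].
  by move=> n; rewrite !inE !orbA.
move=> card4; have uniq4 : uniq [:: i; j; k; l].
  by apply/card_uniqP; rewrite -(eq_card set4E).
by rewrite (eq_bigl _ _ set4E) -big_uniq //= !big_cons big_nil addr0 !addrA.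
Qed.

Lemma set4_K (i j : 'I_8) : i != j -> (4 <= i)%N = (4 <= j)%N ->
  exists k l : 'I_8, [set i; j; k; l] = K (4 <= i)%N.
Proof.
move=> neq_ij same_ij.
have Ki : i \in K (4 <= i)%N by rewrite mem_K.
have Kj : j \in K (4 <= i)%N by rewrite mem_K same_ij.
have Kij : j \in K (4 <= i)%N :\ i by rewrite in_setD1 eq_sym neq_ij Kj.
have /cards2P [k [l [_ rest]]] : #|K (4 <= i)%N :\ i :\ j| == 2%N.
  by move: (card_K (4 <= i)%N); rewrite (cardsD1 i) (cardsD1 j) Ki Kij !add1n => -[->].
exists k, l; apply/setP => n; rewrite -setUA -rest !inE.
case: (eqVneq n i) => [->|_]; first by rewrite Ki.
by case: (eqVneq n j) => [->|_]; rewrite ?Kj.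
Qed.

Lemma sum_xv_K p w : inW w ->
  \sum_(n in K p) xv n w = 1 + 2 * xv 7 w + if p then - Xmx_shift w else Xmx_shift w.
Proof.
move=> /inW_wc1 Ww; rewrite big_mkcond big_ord8 !mem_K !inordK //.
by case: p; rewrite /= /Xmx_shift /xv /xidx /= ?Ww; ring.
Qed.

Lemma vform_Xmx_K b (i j k l : 'I_8) p w : [set i; j; k; l] = K p -> inW w ->
  vform b i j (Xmx *m w) = vform (~~ b) k l w.
Proof.
move=> ijkl Ww.
have /andP [Ki Kj] : (i \in K p) && (j \in K p) by rewrite -ijkl !inE !eqxx ?orbT.
have xv_k : xv k w = \sum_(n in K p) xv n w - xv i w - xv j w - xv l w.
  by rewrite -ijkl big_set4 ?ijkl ?card_K //; ring.
rewrite /vform !xv_Xmx // xv7_Xmx // xv_k sum_xv_K //.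
rewrite !mem_K in Ki Kj; rewrite (eqP Ki) (eqP Kj).
by case: {ijkl Ki Kj xv_k} p b => -[]; ring.
Qed.

Lemma vform_Xmx_mixed b (i j : 'I_8) w : (4 <= i)%N != (4 <= j)%N -> inW w ->
  vform b i j (Xmx *m w) = vform b i j w.
Proof.
move=> mixed Ww; rewrite /vform !xv_Xmx // xv7_Xmx //.
by case: (4 <= i)%N (4 <= j)%N mixed b => -[] // _ -[]; ring.
Qed.

Theorem proposition3p3 :
  (forall (k : 'I_6) (b : bool) (i j : 'I_8) (A : 'M[algC]_8),
      (i < j)%N -> vset b i j A ->
      vset b (rho k i) (rho k j) (A *m sgen (6 - k)))
  /\
  (forall (b : bool) (i j : 'I_8) (A : 'M[algC]_8),
      (i < j)%N -> vset b i j A ->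
      (forall (k l : 'I_8) (p : bool), [set i; j; k; l] = K p ->
          vset (~~ b) k l (A *m Xmx))
      /\
      ((~ exists (k l : 'I_8) (p : bool), [set i; j; k; l] = K p) ->
          vset b i j (A *m Xmx))).
Proof.
split=> [k b i j A _ | b i j A lt_ij vA].
  have k_range : (0 < 6 - k < 7)%N by rewrite subn_gt0 ltn_ord ltnS leq_subr.
  apply: vset_mulmx (inH_sgen k_range) _ (fun w _ => vform_sgen k b i j w).
  by move=> w; apply: inW_sgen.
have HX : inH Xmx := inH_gen genX.
split=> [k l p ijkl | not_K].
  by apply: vset_mulmx HX inW_Xmx _ vA => w; apply: vform_Xmx_K ijkl.
apply: vset_mulmx HX inW_Xmx _ vA => w; apply: vform_Xmx_mixed.
apply/negP => /eqP same_ij; apply: not_K.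
have neq_ij : i != j by rewrite -val_eqE /= neq_ltn lt_ij.
by have [k [l ijkl]] := set4_K neq_ij same_ij; exists k, l, (4 <= i)%N.
Qed.
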